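(* Let $H\in\mathbb{R}^{n\times n}$ be symmetric positive definite with LDL decomposition $H=(\grave U+I)D(\grave U+I)^T$ ($\grave U$ strictly upper triangular, $D$ diagonal). Let $w\in\mathbb{R}^{1\times n}$ and let $\mathcal{Q}:\mathbb{R}\to\mathbb{R}$ be any rounding map, for example nearest rounding to a finite grid with clamping. Run the OPTQ procedure on $w$. Then for each $t=1,\dots,n$ the value produced by OPTQ is $$\hat w_t=\mathcal{Q}\big(w_t+(w-\hat w)\grave U e_t\big)=\mathcal{Q}\big(w_t-(\hat w_{1:(t-1)}-w_{1:(t-1)})\grave U_{1:(t-1),t}\big).$$ Thus OPTQ coincides with adaptive rounding with linear feedback using $U=\grave U$ (i.e. LDLQ).
   Context: OPTQ procedure: quantize the entries of the row vector $w$ in the order $t=1,\dots,n$. At step $t$, with $\hat w_1,\dots,\hat w_{t-1}$ already fixed, set $\Delta_{1:(t-1)}=\hat w_{1:(t-1)}-w_{1:(t-1)}$. Let $\Delta^*_{t:n}\in\mathbb{R}^{1\times(n-t+1)}$ minimize the proxy loss $\Delta H\Delta^T$ over $\Delta_{t:n}$, where $\Delta=(\Delta_{1:(t-1)},\Delta_{t:n})$. Explicitly, $\Delta^*_{t:n}=-\Delta_{1:(t-1)}H_{1:(t-1),t:n}(H_{t:n,t:n})^{-1}$. Then set $\hat w_t=\mathcal{Q}(w_t+(\Delta^*_{t:n})_1)$, where $(\cdot)_1$ is the first entry. $e_t$ is the $t$-th standard basis vector. Subscript ranges denote submatrices and subvectors. *)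

From HB Require Import structures.
From mathcomp Require Import all_boot all_order all_algebra.
From mathcomp Require Import reals.
Unset Printing Implicit Defensive.
Import Order.TTheory GRing.Theory Num.Theory.
Local Open Scope ring_scope.

Section OPTQ.
Variable R : realType.
Variable n : nat.

Definition sym_posdef (H : 'M[R]_n) : Prop :=
  H^T = H /\ forall x : 'rV[R]_n, x != 0 -> 0 < (x *m H *m x^T) 0 0.

Definition strict_upper (U : 'M[R]_n) : Prop :=
  forall i j : 'I_n, (j <= i)%N -> U i j = 0.

Lemma ord_sub_gt0 (t : 'I_n) : (0 < n - t)%N.
Proof. by rewrite subn_gt0. Qed.

Lemma ord_shift_lt (t : 'I_n) (j : 'I_(n - t)) : (t + j < n)%N.
Proof.
have := ltn_ord j; have := ltn_ord t; move=> Ht Hj.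
by rewrite -ltn_subRL.
Qed.

(* index maps: 1:(t-1) (0-based: indices < t) and t:n (0-based: indices >= t) *)
Definition lo_idx (t : 'I_n) (i : 'I_t) : 'I_n :=
  widen_ord (ltnW (ltn_ord t)) i.
Definition hi_idx (t : 'I_n) (j : 'I_(n - t)) : 'I_n :=
  Ordinal (@ord_shift_lt t j).
Definition first_idx (t : 'I_n) : 'I_(n - t) := Ordinal (ord_sub_gt0 t).

(* Delta*_{t:n} = - Delta_{1:(t-1)} H_{1:(t-1),t:n} (H_{t:n,t:n})^{-1},
   where Delta_{1:(t-1)} = v_{1:(t-1)} - w_{1:(t-1)} (v = already fixed entries) *)
Definition delta_star (H : 'M[R]_n) (w v : 'rV[R]_n) (t : 'I_n) : 'rV[R]_(n - t) :=
  let Dprev : 'rV[R]_t := \row_(i < t) (v 0 (lo_idx t i) - w 0 (lo_idx t i)) in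
  let H12 : 'M[R]_(t, n - t) := \matrix_(i < t, j < n - t) H (lo_idx t i) (hi_idx t j) in
  let H22 : 'M[R]_(n - t) := \matrix_(i < n - t, j < n - t) H (hi_idx t i) (hi_idx t j) in
  - (Dprev *m H12 *m invmx H22).

(* OPTQ: after k steps, entries 0..k-1 are quantized (0-based); the remaining
   entries still hold w and are never read by later steps. *)
Fixpoint optq_rec (H : 'M[R]_n) (Q : R -> R) (w : 'rV[R]_n) (k : nat) : 'rV[R]_n :=
  match k with
  | 0 => w
  | k'.+1 =>
      let v := optq_rec H Q w k' in
      match (insub k' : option 'I_n) with
      | Some t => \row_j (if j == t then Q (w 0 t + delta_star H w v t 0 (first_idx t))
                          else v 0 j)
      | None => v
      end
  end.

Definition optq (H : 'M[R]_n) (Q : R -> R) (w : 'rV[R]_n) : 'rV[R]_n :=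
  optq_rec H Q w n.

End OPTQ.

Arguments sym_posdef {R n}.
Arguments strict_upper {R n}.
Arguments delta_star {R n}.
Arguments optq_rec {R n}.
Arguments optq {R n}.

From HB Require Import structures.
From mathcomp Require Import all_boot all_order all_algebra.
From mathcomp Require Import reals.
Import Order.TTheory GRing.Theory Num.Theory.
Local Open Scope ring_scope.

(* Write L := U + 1 for the unit upper-triangular LDL factor, so that
   H = L D L^T.  At step t the OPTQ correction is the first entry of
   -Delta_{<t} H_{<t,>=t} (H_{>=t,>=t})^{-1}, so everything rests on
   identifying the first column of H_{<t,>=t} (H_{>=t,>=t})^{-1}.

   1. Bookkeeping for the recursion [optq_rec]: step t writes entry t and
      never touches it again, so the entries read at step t are the final
      quantized values.
   2. Since L is upper triangular, rows >= t of L vanish in columns < t,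
      hence both blocks factor through the trailing block of L:
      H_{A,>=t} = L_{A,>=t} D_{>=t} (L_{>=t,>=t})^T  (lemma [ldl_block]).
   3. A congruence cancellation (B M C^T)(C M C^T)^{-1} = B C^{-1} turns the
      feedback matrix into L_{<t,>=t} (L_{>=t,>=t})^{-1}; as the first column
      of the unit upper-triangular L_{>=t,>=t} is e_1, its first column is
      L_{<t,t} = U_{<t,t}  (lemma [optq_feedback]).
   Positive definiteness is only used to make D_{>=t} invertible. *)

Section OptqRecursion.
Variables (R : realType) (n : nat) (H : 'M[R]_n) (Q : R -> R) (w : 'rV[R]_n).

Lemma optq_rec_frozen (k : nat) (j : 'I_n) :
  (j < k)%N -> optq_rec H Q w k 0 j = optq_rec H Q w j.+1 0 j.
Proof.
elim: k => [//|k IH] lt_jk.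
have [-> //|ne_jk] := eqVneq (j : nat) k.
rewrite /= -IH; last by rewrite ltn_neqAle ne_jk -ltnS.
case: insubP => [t _ val_t|_] //.
rewrite mxE ifN //; apply/eqP => Ejt.
by move: ne_jk; rewrite Ejt val_t eqxx.
Qed.

Lemma optq_rec_prefix (t i : 'I_n) :
  (i < t)%N -> optq_rec H Q w t 0 i = optq H Q w 0 i.
Proof. by move=> lt_it; rewrite /optq !optq_rec_frozen. Qed.

Lemma optq_step (t : 'I_n) :
  optq H Q w 0 t =
  Q (w 0 t + delta_star H w (optq_rec H Q w t) t 0 (first_idx n t)).
Proof. by rewrite /optq optq_rec_frozen //= valK mxE eqxx. Qed.

End OptqRecursion.

Section BlockAlgebra.
Variable R : comUnitRingType.

Lemma mulmx_inv_congr (m k : nat) (B : 'M[R]_(m, k)) (M C : 'M[R]_k) :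
  M \in unitmx -> C \in unitmx ->
  B *m M *m C^T *m invmx (C *m M *m C^T) = B *m invmx C.
Proof.
move=> uM uC.
have uK : C *m M *m C^T \in unitmx by rewrite !unitmx_mul unitmx_tr uC uM.
have -> : B *m M *m C^T = B *m invmx C *m (C *m M *m C^T).
  by rewrite !mulmxA mulmxKV.
by rewrite mulmxK.
Qed.

Lemma mulmx_unit_col (m k : nat) (Y : 'M[R]_(m, k)) (C : 'M[R]_k) (i : 'I_m) (j : 'I_k) :
  (forall l, C l j = (l == j)%:R) -> (Y *m C) i j = Y i j.
Proof.
move=> Cj; rewrite mxE (bigD1 j) //= Cj eqxx mulr1 big1 ?addr0 // => l ne_lj.
by rewrite Cj (negbTE ne_lj) mulr0.
Qed.

Lemma ldl_entry (k : nat) (L D : 'M[R]_k) (a b : 'I_k) : is_diag_mx D ->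
  (L *m D *m L^T) a b = \sum_l L a l * D l l * L b l.
Proof.
move=> /is_diag_mxP diagD; rewrite mxE; apply: eq_bigr => l _.
rewrite !mxE (bigD1 l) //= big1 ?addr0 // => l' ne_l'l.
by rewrite diagD ?mulr0 // (inj_eq val_inj).
Qed.

End BlockAlgebra.

Lemma sum_hi_idx {V : nmodType} (n : nat) (t : 'I_n) (F : 'I_n -> V) :
  (forall k : 'I_n, (k < t)%N -> F k = 0) ->
  \sum_k F k = \sum_(j < n - t) F (hi_idx n t j).
Proof.
move=> F0; rewrite (bigID (fun k : 'I_n => (t <= k)%N)) /=.
rewrite [X in _ + X]big1 ?addr0; last by move=> k; rewrite -ltnNge; apply: F0.
rewrite (reindex_onto (hi_idx n t) (fun k : 'I_n => insubd (first_idx n t) (k - t)%N)) /=.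
  apply: eq_bigl => j; rewrite leq_addr /=; apply/eqP/val_inj.
  by rewrite val_insubd /= addKn ltn_ord.
move=> k le_tk; apply/val_inj; rewrite /= val_insubd.
by rewrite ltn_sub2r ?ltn_ord ?subnKC //; apply: leq_ltn_trans le_tk _.
Qed.

Section LDL.
Variables (R : realType) (n : nat) (U : 'M[R]_n).
Hypothesis U_strict : strict_upper U.

Lemma ldl_factor_lower (i k : 'I_n) : (k < i)%N -> (U + 1%:M) i k = 0.
Proof.
move=> lt_ki; rewrite !mxE U_strict; last exact: ltnW.
by rewrite eq_sym -(inj_eq val_inj) /= (ltn_eqF lt_ki) add0r.
Qed.

Lemma ldl_factor_diag (i : 'I_n) : (U + 1%:M) i i = 1.
Proof. by rewrite !mxE U_strict // eqxx add0r. Qed.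

Lemma ldl_factor_unit : U + 1%:M \in unitmx.
Proof.
rewrite unitmxE -det_tr det_trig.
  by rewrite big1 ?unitr1 // => i _; rewrite mxE ldl_factor_diag.
by apply/is_trig_mxP => i j lt_ij; rewrite mxE ldl_factor_lower.
Qed.

Lemma strict_upper_feedback (v w : 'rV[R]_n) (t : 'I_n) :
  ((w - v) *m U) 0 t = - \sum_(i < n | (i < t)%N) (v 0 i - w 0 i) * U i t.
Proof.
rewrite mxE -sumrN (bigID (fun i : 'I_n => (i < t)%N)) /=.
rewrite [X in _ + X]big1 ?addr0; last first.
  by move=> i; rewrite -leqNgt => le_ti; rewrite U_strict ?mulr0.
by apply: eq_bigr => i _; rewrite !mxE -mulNr opprB.
Qed.

Definition trail_factor (t : 'I_n) : 'M[R]_(n - t) :=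
  \matrix_(i, j) (U + 1%:M) (hi_idx n t i) (hi_idx n t j).

Lemma trail_factor_unit (t : 'I_n) : trail_factor t \in unitmx.
Proof.
rewrite unitmxE -det_tr det_trig.
  by rewrite big1 ?unitr1 // => i _; rewrite 2!mxE ldl_factor_diag.
by apply/is_trig_mxP => i j lt_ij; rewrite 2!mxE ldl_factor_lower //= ltn_add2l.
Qed.

Lemma trail_factor_first_col (t : 'I_n) (l : 'I_(n - t)) :
  trail_factor t l (first_idx n t) = (l == first_idx n t)%:R.
Proof.
rewrite mxE; have [->|ne_l] := eqVneq l (first_idx n t).
  by rewrite ldl_factor_diag.
rewrite ldl_factor_lower //= addn0 -[X in (X < _)%N]addn0 ltn_add2l lt0n.
by apply: contra ne_l => /eqP l0; apply/eqP/val_inj.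
Qed.

Variables (H D : 'M[R]_n).
Hypotheses (D_diag : is_diag_mx D) (H_ldl : H = (U + 1%:M) *m D *m (U + 1%:M)^T).

(* A positive definite H = L D L^T has a positive diagonal D:
   test against y = e_k L^{-1}, for which y H y^T = D_kk. *)
Lemma ldl_diag_gt0 : sym_posdef H -> forall k, 0 < D k k.
Proof.
move=> [_ H_pos] k.
set y : 'rV[R]_n := delta_mx 0 k *m invmx (U + 1%:M).
have yL : y *m (U + 1%:M) = delta_mx 0 k by rewrite mulmxKV ?ldl_factor_unit.
have y_neq0 : y != 0.
  apply/eqP => y0; move: yL; rewrite y0 mul0mx => /matrixP /(_ 0 k).
  by rewrite !mxE !eqxx /= => /eqP; rewrite eq_sym oner_eq0.
have := H_pos y y_neq0; rewrite H_ldl !mulmxA yL -mulmxA -trmx_mul yL.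
by rewrite -rowE trmx_delta -colE !mxE.
Qed.

Definition trail_diag (t : 'I_n) : 'M[R]_(n - t) :=
  diag_mx (\row_j D (hi_idx n t j) (hi_idx n t j)).

Lemma trail_diag_unit : sym_posdef H -> forall t, trail_diag t \in unitmx.
Proof.
move=> H_pd t; rewrite unitmxE det_diag unitfE lt0r_neq0 //.
by apply: prodr_gt0 => i _; rewrite mxE ldl_diag_gt0.
Qed.

Lemma ldl_block (t : 'I_n) (m : nat) (rows : 'I_m -> 'I_n) :
  \matrix_(i, j) H (rows i) (hi_idx n t j) =
  (\matrix_(i, j) (U + 1%:M) (rows i) (hi_idx n t j)) *m trail_diag t *m
  (trail_factor t)^T.
Proof.
apply/matrixP => i j; rewrite mul_mx_diag !mxE H_ldl ldl_entry //.
rewrite (@sum_hi_idx R _ t); last first.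
  move=> k lt_kt; rewrite [(U + 1%:M) (hi_idx n t j) k]ldl_factor_lower ?mulr0 //.
  by apply: (leq_trans lt_kt); rewrite /= leq_addr.
by apply: eq_bigr => k _; rewrite !mxE.
Qed.

Lemma optq_feedback : sym_posdef H -> forall (t : 'I_n) (i : 'I_t),
  ((\matrix_(i, j) H (lo_idx n t i) (hi_idx n t j)) *m
   invmx (\matrix_(i, j) H (hi_idx n t i) (hi_idx n t j)))
    i (first_idx n t) = U (lo_idx n t i) t.
Proof.
move=> H_pd t i; rewrite !ldl_block.
rewrite mulmx_inv_congr ?trail_diag_unit ?trail_factor_unit //.
rewrite -(@mulmx_unit_col _ _ _ _ (trail_factor t)); last first.
  by move=> l; rewrite trail_factor_first_col.
rewrite mulmxKV ?trail_factor_unit // !mxE.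
have -> : hi_idx n t (first_idx n t) = t by apply: val_inj; rewrite /= addn0.
by rewrite -(inj_eq val_inj) /= ltn_eqF ?addr0.
Qed.

End LDL.

Theorem theorem6 (R : realType) (n : nat) (H U D : 'M[R]_n) (w : 'rV[R]_n)
    (Q : R -> R) :
  sym_posdef H -> strict_upper U -> is_diag_mx D ->
  H = (U + 1%:M) *m D *m (U + 1%:M)^T ->
  forall t : 'I_n,
    optq H Q w 0 t = Q (w 0 t + ((w - optq H Q w) *m U) 0 t) /\
    optq H Q w 0 t =
      Q (w 0 t - \sum_(i < n | (i < t)%N) (optq H Q w 0 i - w 0 i) * U i t).
Proof.
move=> H_pd U_strict D_diag H_ldl t.
have ldlq : optq H Q w 0 t =
      Q (w 0 t - \sum_(i < n | (i < t)%N) (optq H Q w 0 i - w 0 i) * U i t).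
  rewrite optq_step; congr (Q (_ + _)).
  rewrite /delta_star /= -mulmxA mxE mxE; congr (- _).
  rewrite (big_ord_narrow (ltnW (ltn_ord t))) /=; apply: eq_bigr => j _.
  rewrite (optq_feedback _ _ _ U_strict _ _ D_diag H_ldl H_pd) mxE.
  by rewrite optq_rec_prefix //; exact: ltn_ord j.
split; last exact: ldlq.
by rewrite [LHS]ldlq (strict_upper_feedback _ _ _ U_strict).
Qed.
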